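(* Let $k,l,m$ be pairwise distinct complex parameters and $J,\widetilde J,\widehat J$ pairwise commuting invertible constant $N\times N$ matrices, with variables $\xi^J_k,\xi^{\widetilde J}_l,\xi^{\widehat J}_m$ and $N\times N$ matrix fields $H_{kl},H_{lk},H_{lm},H_{ml},H_{km},H_{mk}$. Define \begin{align*} \mathcal L_{klm}=&\tfrac12\operatorname{tr}\Big\{H_{ml}\widetilde J(\partial^J_kH_{lm})\widehat J-(\partial^J_kH_{ml})\widetilde JH_{lm}\widehat J+H_{km}\widehat J(\partial^{\widetilde J}_lH_{mk})J-(\partial^{\widetilde J}_lH_{km})\widehat JH_{mk}J\\ &\qquad+H_{lk}J(\partial^{\widehat J}_mH_{kl})\widetilde J-(\partial^{\widehat J}_mH_{lk})JH_{kl}\widetilde J\Big\}\\ &+\operatorname{tr}\Big\{H_{ml}\widetilde JH_{lm}\frac{J\widehat J}{k-m}-H_{ml}\frac{\widetilde JJ}{k-l}H_{lm}\widehat J+H_{km}\widehat JH_{mk}\frac{\widetilde JJ}{l-k}-H_{km}\frac{\widehat J\widetilde J}{l-m}H_{mk}J\\ &\qquad+H_{lk}JH_{kl}\frac{\widehat J\widetilde J}{m-l}-H_{lk}\frac{\widehat JJ}{m-k}H_{kl}\widetilde J\Big\} +\operatorname{tr}\Big\{H_{lm}\widehat JH_{mk}JH_{kl}\widetilde J-H_{ml}\widetilde JH_{lk}JH_{km}\widehat J\Big\}. \end{align*} Then the Euler–Lagrange equations of $\mathcal L_{klm}$ with respect to the six fields are equivalent to the six equations $$\partial^J_kH_{lm}=\tfrac{J}{k-l}H_{lm}-H_{lm}\tfrac{J}{k-m}+H_{lk}JH_{km},\qquad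 \partial^J_kH_{ml}=\tfrac{J}{k-m}H_{ml}-H_{ml}\tfrac{J}{k-l}+H_{mk}JH_{kl},$$ $$\partial^{\widetilde J}_lH_{mk}=\tfrac{\widetilde J}{l-m}H_{mk}-H_{mk}\tfrac{\widetilde J}{l-k}+H_{ml}\widetilde JH_{lk},\qquad \partial^{\widetilde J}_lH_{km}=\tfrac{\widetilde J}{l-k}H_{km}-H_{km}\tfrac{\widetilde J}{l-m}+H_{kl}\widetilde JH_{lm},$$ $$\partial^{\widehat J}_mH_{kl}=\tfrac{\widehat J}{m-k}H_{kl}-H_{kl}\tfrac{\widehat J}{m-l}+H_{km}\widehat JH_{ml},\qquad \partial^{\widehat J}_mH_{lk}=\tfrac{\widehat J}{m-l}H_{lk}-H_{lk}\tfrac{\widehat J}{m-k}+H_{lm}\widehat JH_{mk}.$$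
   Context: $\partial^J_k=\partial/\partial\xi^J_k$ etc.; $\operatorname{tr}$ is the matrix trace; the Euler–Lagrange equations are the standard ones for a Lagrangian density in the three independent variables $\xi^J_k,\xi^{\widetilde J}_l,\xi^{\widehat J}_m$, obtained by varying each matrix entry of each field independently. *)

From HB Require Import structures.
From mathcomp Require Import all_boot all_order all_algebra complex.
From mathcomp Require Import all_classical all_reals all_analysis.
Import numFieldNormedType.Exports.
Set Implicit Arguments. Unset Strict Implicit. Unset Printing Implicit Defensive.
Import Order.TTheory GRing.Theory Num.Theory.
Local Open Scope ring_scope.

Section EulerLagrange.
Variables (K : numFieldType) (N : nat).

(** Points of the space of independent variables (xi^J_k, xi^~J_l, xi^^J_m),
    indexed by 'I_3 : 0 <-> xi^J_k, 1 <-> xi^~J_l, 2 <-> xi^^J_m. *)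
Definition pt := 'I_3 -> K.

Definition shift (p : pt) (x : 'I_3) (t : K) : pt :=
  fun y => if y == x then p y + t else p y.

Definition pderiv (f : pt -> K) (x : 'I_3) (p : pt) : K :=
  derive1 (fun t => f (shift p x t)) 0.

Definition mpderiv (F : pt -> 'M[K]_N) (x : 'I_3) (p : pt) : 'M[K]_N :=
  \matrix_(i, j) pderiv (fun q => F q i j) x p.

Definition fields := 'I_6 -> pt -> 'M[K]_N.

(** First-order Lagrangian density: a function of the values of the six
    fields and of all their first partial derivatives (d x f = d_x H_f). *)
Definition lagrangian :=
  ('I_6 -> 'M[K]_N) -> ('I_3 -> 'I_6 -> 'M[K]_N) -> K.

Definition updf (U : 'I_6 -> 'M[K]_N) (f : 'I_6) (A : 'M[K]_N) :=
  fun g => if g == f then A else U g.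

Definition updd (D : 'I_3 -> 'I_6 -> 'M[K]_N) (x : 'I_3) (f : 'I_6)
  (A : 'M[K]_N) :=
  fun y g => if (y == x) && (g == f) then A else D y g.

Definition dL_dval (L : lagrangian) U D (f : 'I_6) (a b : 'I_N) : K :=
  derive1 (fun t => L (updf U f (U f + t *: delta_mx a b)) D) 0.

Definition dL_dder (L : lagrangian) U D (x : 'I_3) (f : 'I_6) (a b : 'I_N) : K :=
  derive1 (fun t => L U (updd D x f (D x f + t *: delta_mx a b))) 0.

Definition vals (H : fields) (p : pt) : 'I_6 -> 'M[K]_N := fun f => H f p.
Definition ders (H : fields) (p : pt) : 'I_3 -> 'I_6 -> 'M[K]_N :=
  fun x f => mpderiv (H f) x p.

Definition EL_expr (L : lagrangian) (H : fields) (f : 'I_6) (a b : 'I_N)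
  (p : pt) : K :=
  dL_dval L (vals H p) (ders H p) f a b
  - \sum_(x < 3) pderiv (fun q => dL_dder L (vals H q) (ders H q) x f a b) x p.

Definition EL_equations (L : lagrangian) (H : fields) : Prop :=
  forall (f : 'I_6) (a b : 'I_N) (p : pt), EL_expr L H f a b p = 0.

Definition ikl : 'I_6 := inord 0.
Definition ilk : 'I_6 := inord 1.
Definition ilm : 'I_6 := inord 2.
Definition iml : 'I_6 := inord 3.
Definition ikm : 'I_6 := inord 4.
Definition imk : 'I_6 := inord 5.
Definition xk : 'I_3 := inord 0.
Definition xl : 'I_3 := inord 1.
Definition xm : 'I_3 := inord 2.

Definition Lklm (J Jt Jh : 'M[K]_N) (k l m : K) : lagrangian :=
  fun U D =>
  let Hkl := U ikl in let Hlk := U ilk in let Hlm := U ilm in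
  let Hml := U iml in let Hkm := U ikm in let Hmk := U imk in
  2^-1 * \tr (
      Hml *m Jt *m D xk ilm *m Jh - D xk iml *m Jt *m Hlm *m Jh
    + Hkm *m Jh *m D xl imk *m J  - D xl ikm *m Jh *m Hmk *m J
    + Hlk *m J *m D xm ikl *m Jt  - D xm ilk *m J *m Hkl *m Jt)
  + \tr (
      Hml *m Jt *m Hlm *m ((k - m)^-1 *: (J *m Jh))
    - Hml *m ((k - l)^-1 *: (Jt *m J)) *m Hlm *m Jh
    + Hkm *m Jh *m Hmk *m ((l - k)^-1 *: (Jt *m J))
    - Hkm *m ((l - m)^-1 *: (Jh *m Jt)) *m Hmk *m J
    + Hlk *m J *m Hkl *m ((m - l)^-1 *: (Jh *m Jt))
    - Hlk *m ((m - k)^-1 *: (Jh *m J)) *m Hkl *m Jt)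
  + \tr (Hlm *m Jh *m Hmk *m J *m Hkl *m Jt
         - Hml *m Jt *m Hlk *m J *m Hkm *m Jh).

Definition six_equations (J Jt Jh : 'M[K]_N) (k l m : K) (H : fields) : Prop :=
  forall p : pt,
  let Hkl := H ikl p in let Hlk := H ilk p in let Hlm := H ilm p in
  let Hml := H iml p in let Hkm := H ikm p in let Hmk := H imk p in
  (mpderiv (H ilm) xk p =
        ((k - l)^-1 *: J) *m Hlm - Hlm *m ((k - m)^-1 *: J) + Hlk *m J *m Hkm) /\
      (mpderiv (H iml) xk p =
        ((k - m)^-1 *: J) *m Hml - Hml *m ((k - l)^-1 *: J) + Hmk *m J *m Hkl) /\
      (mpderiv (H imk) xl p =
        ((l - m)^-1 *: Jt) *m Hmk - Hmk *m ((l - k)^-1 *: Jt) + Hml *m Jt *m Hlk) /\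
      (mpderiv (H ikm) xl p =
        ((l - k)^-1 *: Jt) *m Hkm - Hkm *m ((l - m)^-1 *: Jt) + Hkl *m Jt *m Hlm) /\
      (mpderiv (H ikl) xm p =
        ((m - k)^-1 *: Jh) *m Hkl - Hkl *m ((m - l)^-1 *: Jh) + Hkm *m Jh *m Hml) /\
      (mpderiv (H ilk) xm p =
        ((m - l)^-1 *: Jh) *m Hlk - Hlk *m ((m - k)^-1 *: Jh) + Hlm *m Jh *m Hmk).

Definition fields_derivable (H : fields) : Prop :=
  forall (f : 'I_6) (i j : 'I_N) (x : 'I_3) (p : pt),
    derivable (fun t => H f (shift p x t) i j) 0 1.

End EulerLagrange.

From Pilot Require Import Defs.
From HB Require Import structures.
From mathcomp Require Import all_boot all_order all_algebra complex.
From mathcomp Require Import all_classical all_reals all_analysis.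
From mathcomp Require Import ring.
Import numFieldNormedType.Exports.
Import Order.TTheory GRing.Theory Num.Theory.
Set Implicit Arguments.
Unset Strict Implicit.
Unset Printing Implicit Defensive.
Local Open Scope ring_scope.

(* Every term of L_klm contains a given field, and a given derivative, at most
   once, so L is affine in each of them and its partial derivatives are read
   off exactly from first variations, by cycling traces. In the Euler-Lagrange
   expression of H_f the derivative terms combine into a single one, the
   derivative of its partner field (H_ml for H_lm, ...) along the partner's
   flow direction; after commuting J, Jt and Jh, the whole expression is the
   partner's flow equation sandwiched between invertible matrices. As
   partnering is an involution, the six Euler-Lagrange equations are the six
   flow equations. *)

Lemma mxtrace_mul_delta (R : pzSemiRingType) n (M : 'M[R]_n) (a b : 'I_n) :
  \tr (M *m delta_mx a b) = M b a.
Proof.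
rewrite /mxtrace (bigD1 b) //= big1 ?addr0.
  rewrite mxE (bigD1 a) //= big1 ?addr0; first by rewrite mxE !eqxx mulr1.
  by move=> i ia; rewrite mxE (negPf ia) mulr0.
by move=> i ib; rewrite mxE big1 // => j _; rewrite mxE (negPf ib) andbF mulr0.
Qed.

Lemma mxtraceN (R : pzRingType) n (A : 'M[R]_n) : \tr (- A) = - \tr A.
Proof. exact: raddfN. Qed.

Lemma mxtraceB (R : pzRingType) n (A B : 'M[R]_n) : \tr (A - B) = \tr A - \tr B.
Proof. exact: raddfB. Qed.

Lemma mulmx_unit_sandwich_eq0 (F : fieldType) n (P Q X : 'M[F]_n) :
  P \in unitmx -> Q \in unitmx -> (P *m X *m Q == 0) = (X == 0).
Proof.
move=> uP uQ; rewrite mul_mx_rowfree_eq0 ?row_free_unit //.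
by apply/eqP/eqP=> [PX0|->]; [rewrite -(mulKmx uP X) PX0 mulmx0 | rewrite mulmx0].
Qed.

Lemma mulmx_comm_mx {R : pzSemiRingType} {n} {A B : 'M[R]_n} :
  A *m B = B *m A -> forall m (M : 'M[R]_(m, n)), M *m A *m B = M *m B *m A.
Proof. by move=> cAB m M; rewrite -!mulmxA cAB. Qed.

Section Derivatives.
Variable K : numFieldType.

Lemma derive1_affine (c v : K) : derive1 (fun t : K => c + t * v) 0 = v.
Proof.
rewrite derive1E; apply: derive_val.
have -> : (fun t : K => c + t * v) = cst c + v \*: id by apply/funext => t; rewrite /= mulrC.
have := is_deriveD (is_derive_cst c (0 : K) 1) (is_deriveZ v (is_derive_id (0 : K) 1)).
by rewrite add0r [v *: 1]mulr1.
Qed.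

Lemma is_derive_sum_pointwise (x v : K) n (h : 'I_n -> K -> K) (dh : 'I_n -> K) :
  (forall i, is_derive x v (h i) (dh i)) ->
  is_derive x v (fun t => \sum_(i < n) h i t) (\sum_(i < n) dh i).
Proof. by move=> /is_derive_sum; rewrite fct_sumE. Qed.

Lemma pderiv_mulmx_entry N (F : pt K -> 'M[K]_N) (P Q : 'M[K]_N) x p (i j : 'I_N) :
  (forall a b, derivable (fun t => F (Defs.shift p x t) a b) 0 1) ->
  pderiv (fun q => (P *m F q *m Q) i j) x p = (P *m mpderiv F x p *m Q) i j.
Proof.
move=> dF; rewrite /pderiv derive1E; apply: derive_val.
have entryE (G : 'M[K]_N) :
    (P *m G *m Q) i j = \sum_(b < N) Q b j * \sum_(a < N) P i a * G a b.
  by rewrite mxE; apply: eq_bigr => b _; rewrite mxE mulrC.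
under eq_fun do rewrite entryE.
rewrite entryE; apply: is_derive_sum_pointwise => b.
apply: is_deriveZ; apply: is_derive_sum_pointwise => a.
by apply: is_deriveZ; rewrite mxE /pderiv derive1E; apply: derivableP.
Qed.

End Derivatives.

Lemma iklE : ikl = Ordinal (isT : 0 < 6)%N. Proof. by apply/val_inj/inordK. Qed.
Lemma ilkE : ilk = Ordinal (isT : 1 < 6)%N. Proof. by apply/val_inj/inordK. Qed.
Lemma ilmE : ilm = Ordinal (isT : 2 < 6)%N. Proof. by apply/val_inj/inordK. Qed.
Lemma imlE : iml = Ordinal (isT : 3 < 6)%N. Proof. by apply/val_inj/inordK. Qed.
Lemma ikmE : ikm = Ordinal (isT : 4 < 6)%N. Proof. by apply/val_inj/inordK. Qed.
Lemma imkE : imk = Ordinal (isT : 5 < 6)%N. Proof. by apply/val_inj/inordK. Qed.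
Lemma xkE : xk = Ordinal (isT : 0 < 3)%N. Proof. by apply/val_inj/inordK. Qed.
Lemma xlE : xl = Ordinal (isT : 1 < 3)%N. Proof. by apply/val_inj/inordK. Qed.
Lemma xmE : xm = Ordinal (isT : 2 < 3)%N. Proof. by apply/val_inj/inordK. Qed.

Definition indexE := (iklE, ilkE, ilmE, imlE, ikmE, imkE, xkE, xlE, xmE).

Lemma field_index_ind (P : 'I_6 -> Prop) :
  P ikl -> P ilk -> P ilm -> P iml -> P ikm -> P imk -> forall f, P f.
Proof.
rewrite !indexE => P0 P1 P2 P3 P4 P5.
by case=> [[|[|[|[|[|[|n]]]]]] lt_f6] //;
  [move: P0 | move: P1 | move: P2 | move: P3 | move: P4 | move: P5];
  congr P; apply: val_inj.
Qed.

Lemma big_ord3_vars (M : nmodType) (F : 'I_3 -> M) :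
  \sum_(y < 3) F y = F xk + F xl + F xm.
Proof.
rewrite !big_ord_recr big_ord0 /= add0r !indexE.
by congr (F _ + F _ + F _); apply: val_inj.
Qed.

Lemma big_ord6_fields (M : nmodType) (F : 'I_6 -> M) :
  \sum_(g < 6) F g = F ikl + F ilk + F ilm + F iml + F ikm + F imk.
Proof.
rewrite !big_ord_recr big_ord0 /= add0r !indexE.
by congr (F _ + F _ + F _ + F _ + F _ + F _); apply: val_inj.
Qed.

Section LagrangianKLM.
Variables (K : numFieldType) (N : nat) (J Jt Jh : 'M[K]_N) (k l m : K).

Let L := Lklm J Jt Jh k l m.

Ltac mx_expand :=
  rewrite ?(mulmxDl, mulmxDr, mulmxBl, mulmxBr, mulNmx, mulmxN, opprK,
            scalerN, scaleNr, scalerA, mul0mx, mulmx0)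
          ?(=^~ scalemxAl, =^~ scalemxAr, scalerA, mulNmx, mulmxN, scalerN)
          ?mulmxA.

Ltac trace_expand := rewrite ?(mxtraceD, mxtraceB, mxtraceN, mxtraceZ, mxtrace0).

(* Cycle every trace tr(X B) in which X mentions A until A is the last factor. *)
Ltac trace_rotate_right A :=
  repeat match goal with
  | |- context [\tr (?X *m ?B)] =>
      lazymatch B with context [A] => fail | _ =>
        lazymatch X with context [A] => rewrite (mxtrace_mulC X B) ?mulmxA end end
  end.

Definition grad_val (f : 'I_6) (U : 'I_6 -> 'M[K]_N)
    (D : 'I_3 -> 'I_6 -> 'M[K]_N) : 'M[K]_N :=
  match val f with
  | 0 => - (2^-1 *: (Jt *m D xm ilk *m J))
         + ((m - l)^-1 *: (Jh *m Jt)) *m U ilk *m J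
         - Jt *m U ilk *m ((m - k)^-1 *: (Jh *m J))
         + Jt *m U ilm *m Jh *m U imk *m J
  | 1 => 2^-1 *: (J *m D xm ikl *m Jt)
         + J *m U ikl *m ((m - l)^-1 *: (Jh *m Jt))
         - ((m - k)^-1 *: (Jh *m J)) *m U ikl *m Jt
         - J *m U ikm *m Jh *m U iml *m Jt
  | 2 => - (2^-1 *: (Jh *m D xk iml *m Jt))
         + ((k - m)^-1 *: (J *m Jh)) *m U iml *m Jt
         - Jh *m U iml *m ((k - l)^-1 *: (Jt *m J))
         + Jh *m U imk *m J *m U ikl *m Jt
  | 3 => 2^-1 *: (Jt *m D xk ilm *m Jh)
         + Jt *m U ilm *m ((k - m)^-1 *: (J *m Jh))
         - ((k - l)^-1 *: (Jt *m J)) *m U ilm *m Jh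
         - Jt *m U ilk *m J *m U ikm *m Jh
  | 4 => 2^-1 *: (Jh *m D xl imk *m J)
         + Jh *m U imk *m ((l - k)^-1 *: (Jt *m J))
         - ((l - m)^-1 *: (Jh *m Jt)) *m U imk *m J
         - Jh *m U iml *m Jt *m U ilk *m J
  | _ => - (2^-1 *: (J *m D xl ikm *m Jh))
         + ((l - k)^-1 *: (Jt *m J)) *m U ikm *m Jh
         - J *m U ikm *m ((l - m)^-1 *: (Jh *m Jt))
         + J *m U ikl *m Jt *m U ilm *m Jh
  end.

Lemma Lklm_updf f U D A :
  L (updf U f (U f + A)) D = L U D + \tr (grad_val f U D *m A).
Proof.
move: f; apply: field_index_ind;
rewrite /grad_val /L /Lklm /updf !indexE /=;
mx_expand; trace_expand; trace_rotate_right A; ring.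
Qed.

(* The derivative d_y H_g enters L through tr (grad_der U y g *m d_y H_g); the
   coefficient is split in three so that it visibly depends on a single field. *)
Definition coef_left (y : 'I_3) (g : 'I_6) : 'M[K]_N :=
  match val y, val g with
  | 0, 2 => 2^-1 *: Jh | 0, 3 => - (2^-1 *: Jt)
  | 1, 5 => 2^-1 *: J  | 1, 4 => - (2^-1 *: Jh)
  | 2, 0 => 2^-1 *: Jt | 2, 1 => - (2^-1 *: J)
  | _, _ => 0
  end.

Definition coef_field (y : 'I_3) (g : 'I_6) : 'I_6 :=
  match val y, val g with
  | 0, 2 => iml | 0, 3 => ilm
  | 1, 5 => ikm | 1, 4 => imk
  | 2, 0 => ilk | 2, 1 => ikl
  | _, _ => ikl
  end.

Definition coef_right (y : 'I_3) (g : 'I_6) : 'M[K]_N :=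
  match val y, val g with
  | 0, 2 => Jt | 0, 3 => Jh
  | 1, 5 => Jh | 1, 4 => J
  | 2, 0 => J  | 2, 1 => Jt
  | _, _ => 0
  end.

Definition grad_der U y g : 'M[K]_N :=
  coef_left y g *m U (coef_field y g) *m coef_right y g.

Lemma Lklm_linear_in_ders U D :
  L U D = L U (fun _ _ => 0) + \sum_(y < 3) \sum_(g < 6) \tr (grad_der U y g *m D y g).
Proof.
rewrite big_ord3_vars !big_ord6_fields /grad_der /coef_left /coef_field /coef_right
  /L /Lklm !indexE /=.
mx_expand; trace_expand; trace_rotate_right D; ring.
Qed.

Lemma Lklm_updd U D x f A :
  L U (updd D x f (D x f + A)) = L U D + \tr (grad_der U x f *m A).
Proof.
rewrite [LHS]Lklm_linear_in_ders [X in _ = X + _]Lklm_linear_in_ders.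
have upddE y g : (y != x) || (g != f) -> updd D x f (D x f + A) y g = D y g.
  by rewrite /updd; case: (y == x); case: (g == f).
rewrite (bigD1 x) //= (bigD1 f) //= [in X in _ = X + _](bigD1 x) //= [in X in _ = X + _](bigD1 f) //=.
rewrite {1}/updd !eqxx mulmxDr mxtraceD.
under eq_bigr => g gf do rewrite upddE ?gf ?orbT //.
under [\sum_(i < 3 | i != x) _]eq_bigr => y yx do under eq_bigr => g _ do rewrite upddE ?yx //.
ring.
Qed.

Lemma dL_dval_Lklm U D f a b : dL_dval L U D f a b = grad_val f U D b a.
Proof.
rewrite /dL_dval (_ : (fun t => _) = fun t => L U D + t * grad_val f U D b a).
  exact: derive1_affine.
by apply/funext => t; rewrite Lklm_updf -scalemxAr mxtraceZ mxtrace_mul_delta.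
Qed.

Lemma dL_dder_Lklm U D x f a b : dL_dder L U D x f a b = grad_der U x f b a.
Proof.
rewrite /dL_dder (_ : (fun t => _) = fun t => L U D + t * grad_der U x f b a).
  exact: derive1_affine.
by apply/funext => t; rewrite Lklm_updd -scalemxAr mxtraceZ mxtrace_mul_delta.
Qed.

Definition EL_mx (f : 'I_6) (H : fields K N) (p : pt K) : 'M[K]_N :=
  grad_val f (vals H p) (ders H p)
  - \sum_(x < 3) coef_left x f *m mpderiv (H (coef_field x f)) x p *m coef_right x f.

Lemma EL_expr_Lklm H f a b p : fields_derivable H ->
  EL_expr L H f a b p = EL_mx f H p b a.
Proof.
move=> dH; rewrite /EL_expr dL_dval_Lklm !mxE summxE; congr (_ - _).
apply: eq_bigr => x _; under eq_fun do rewrite dL_dder_Lklm.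
by rewrite /grad_der /vals; apply: pderiv_mulmx_entry => i j; apply: dH.
Qed.

Lemma EL_equations_Lklm H : fields_derivable H ->
  (EL_equations L H <-> forall f p, EL_mx f H p = 0).
Proof.
move=> dH; split=> [EL f p | EL0 f a b p]; last by rewrite EL_expr_Lklm // EL0 mxE.
by apply/matrixP => i j; rewrite -EL_expr_Lklm // EL mxE.
Qed.

Definition flow_dir (g : 'I_6) : 'I_3 :=
  match val g with 0 | 1 => xm | 2 | 3 => xk | _ => xl end.

Definition partner (f : 'I_6) : 'I_6 := coef_field (flow_dir f) f.

Definition flow_rhs (g : 'I_6) (U : 'I_6 -> 'M[K]_N) : 'M[K]_N :=
  match val g with
  | 0 => ((m - k)^-1 *: Jh) *m U ikl - U ikl *m ((m - l)^-1 *: Jh) + U ikm *m Jh *m U iml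
  | 1 => ((m - l)^-1 *: Jh) *m U ilk - U ilk *m ((m - k)^-1 *: Jh) + U ilm *m Jh *m U imk
  | 2 => ((k - l)^-1 *: J) *m U ilm - U ilm *m ((k - m)^-1 *: J) + U ilk *m J *m U ikm
  | 3 => ((k - m)^-1 *: J) *m U iml - U iml *m ((k - l)^-1 *: J) + U imk *m J *m U ikl
  | 4 => ((l - k)^-1 *: Jt) *m U ikm - U ikm *m ((l - m)^-1 *: Jt) + U ikl *m Jt *m U ilm
  | _ => ((l - m)^-1 *: Jt) *m U imk - U imk *m ((l - k)^-1 *: Jt) + U iml *m Jt *m U ilk
  end.

Lemma partnerK : involutive partner.
Proof.
by apply: field_index_ind; rewrite /partner /coef_field /flow_dir !indexE.
Qed.

Lemma flow_dir_partner f : flow_dir (partner f) = flow_dir f.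
Proof.
by move: f; apply: field_index_ind; rewrite /partner /coef_field /flow_dir !indexE.
Qed.

Lemma six_equationsE H : six_equations J Jt Jh k l m H <->
  forall g p, mpderiv (H g) (flow_dir g) p = flow_rhs g (vals H p).
Proof.
rewrite /six_equations /flow_dir /flow_rhs /vals; split=> [E g p | E p].
  have := E p; rewrite !indexE /= => -[? [? [? [? [? ?]]]]].
  by move: g; apply: field_index_ind; rewrite !indexE.
move: (E ilm p) (E iml p) (E imk p) (E ikm p) (E ikl p) (E ilk p).
by rewrite !indexE /= => *; do !split.
Qed.

Hypotheses (neq_kl : k != l) (neq_lm : l != m) (neq_km : k != m).
Hypotheses (JJt : J *m Jt = Jt *m J) (JJh : J *m Jh = Jh *m J) (JtJh : Jt *m Jh = Jh *m Jt).

Lemma EL_mxE f H p : EL_mx f H p =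
  2 *: (coef_left (flow_dir f) f
        *m (flow_rhs (partner f) (vals H p) - mpderiv (H (partner f)) (flow_dir f) p)
        *m coef_right (flow_dir f) f).
Proof.
have JtJ := esym JJt; have JhJ := esym JJh; have JhJt := esym JtJh.
move: f; apply: field_index_ind;
rewrite /EL_mx big_ord3_vars /grad_val /partner /coef_left /coef_field /coef_right
  /flow_rhs /flow_dir /vals /ders !indexE /=;
mx_expand; rewrite ?addr0;
rewrite ?(mulmx_comm_mx JtJ, mulmx_comm_mx JhJ, mulmx_comm_mx JhJt, JtJ, JhJ, JhJt);
apply/matrixP => i j; rewrite !mxE; field;
by rewrite ?subr_eq0 ?[l == k]eq_sym ?[m == l]eq_sym ?[m == k]eq_sym ?neq_kl ?neq_lm ?neq_km.
Qed.

Hypotheses (unit_J : J \in unitmx) (unit_Jt : Jt \in unitmx) (unit_Jh : Jh \in unitmx).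

Lemma unitmx_coef_left f : coef_left (flow_dir f) f \in unitmx.
Proof.
move: f; apply: field_index_ind; rewrite /coef_left /flow_dir !indexE /= -?scaleNr;
by rewrite unitmxZ // unitfE ?oppr_eq0 invr_eq0 pnatr_eq0.
Qed.

Lemma unitmx_coef_right f : coef_right (flow_dir f) f \in unitmx.
Proof. by move: f; apply: field_index_ind; rewrite /coef_right /flow_dir !indexE. Qed.

Lemma EL_mx_eq0 f H p : (EL_mx f H p == 0) =
  (mpderiv (H (partner f)) (flow_dir f) p == flow_rhs (partner f) (vals H p)).
Proof.
rewrite EL_mxE scaler_eq0 pnatr_eq0 /= mulmx_unit_sandwich_eq0
  ?unitmx_coef_left ?unitmx_coef_right //.
by rewrite subr_eq0 eq_sym.
Qed.

End LagrangianKLM.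

Theorem mainTheorem12 (R : realType) (N : nat) (k l m : R[i])
  (J Jt Jh : 'M[R[i]]_N) (H : fields R[i] N) :
  k != l -> l != m -> k != m ->
  J *m Jt = Jt *m J -> J *m Jh = Jh *m J -> Jt *m Jh = Jh *m Jt ->
  J \in unitmx -> Jt \in unitmx -> Jh \in unitmx ->
  fields_derivable H ->
  (EL_equations (Lklm J Jt Jh k l m) H <-> six_equations J Jt Jh k l m H).
Proof.
move=> neq_kl neq_lm neq_km JJt JJh JtJh unit_J unit_Jt unit_Jh dH.
have EL_mx_eq0 := EL_mx_eq0 neq_kl neq_lm neq_km JJt JJh JtJh unit_J unit_Jt unit_Jh.
rewrite EL_equations_Lklm // six_equationsE; split=> E f p.
  by have /eqP := E (partner f) p; rewrite EL_mx_eq0 partnerK flow_dir_partner => /eqP.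
by apply/eqP; rewrite EL_mx_eq0 -flow_dir_partner; apply/eqP; apply: E.
Qed.
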